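(* Let $d\ge 3$ and let $A=\lambda B+(1-\lambda)B'$ with $0<\lambda<1$, where $B,B'$ are $d$-dimensional $(0,1)$-matrices of order $4$ each equivalent to $\mathcal{M}_4^d$. If the tessellation index of $A$ (with respect to $B,B'$) is $-\infty$, i.e. no filled subcube of $B$ intersects any filled subcube of $B'$, then $\operatorname{per}A>0$.
   Context: $\mathcal{M}_4^d$ has entry $1$ at $\alpha$ iff $\alpha_1+\dots+\alpha_d\equiv0\pmod 4$. Equivalence: permuting coordinate positions and/or applying a permutation of $\{0,1,2,3\}$ to a single coordinate, repeatedly. A diagonal is a set of $4$ indices any two of which differ in every coordinate; $\operatorname{per}A=\sum_p\prod_{\alpha\in p}a_\alpha$ over diagonals. Define $p_1,p_2,p_3:\{0,1,2,3\}\to\{0,1\}$ by $p_1(0)=p_1(1)=0,\ p_1(2)=p_1(3)=1$; $p_2(0)=p_2(2)=0,\ p_2(1)=p_2(3)=1$; $p_3(0)=p_3(3)=0,\ p_3(1)=p_3(2)=1$; and $\mu_1(0)=\mu_1(2)=0,\ \mu_1(1)=\mu_1(3)=1$; $\mu_2(0)=\mu_2(1)=0,\ \mu_2(2)=\mu_2(3)=1$; $\mu_3(0)=\mu_3(2)=0,\ \mu_3(1)=\mu_3(3)=1$. $Q_s^d=\{y\in\{0,1\}^d:w(y)\equiv s\pmod 2\}$ ($w$ = Hamming weight). For $\mathcal{E}\in\{1,2,3\}^d$, $s\in\{0,1\}$, $\lambda:Q_s^d\to\{0,1\}$, the block permutation with parameters $(\mathcal{E},\lambda,s)$ is the $(0,1)$-matrix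 with entry $1$ at $\alpha$ iff $\bigoplus_i p_{\varepsilon_i}(\alpha_i)=s$ and $\bigoplus_i\mu_{\varepsilon_i}(\alpha_i)\oplus\lambda(p_{\varepsilon_1}(\alpha_1),\dots,p_{\varepsilon_d}(\alpha_d))=0$. Every matrix equivalent to $\mathcal{M}_4^d$ ($d\ge3$) is a block permutation for a unique parameter triple; relative to these, its subcubes are $C_y=\{\alpha:p_{\varepsilon_i}(\alpha_i)=y_i\ \forall i\}$ and $C_y$ is filled if $w(y)\equiv s\pmod 2$. The intersection of a subcube of $B$ with a subcube of $B'$ is either empty or a product set of size $2^j$; the tessellation index of $\lambda B+(1-\lambda)B'$ is the maximum of such $j$ over pairs (filled subcube of $B$, filled subcube of $B'$) with nonempty intersection, and $-\infty$ if all such intersections are empty. *)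

From HB Require Import structures.
From mathcomp Require Import all_boot all_order all_fingroup all_algebra.
Set Implicit Arguments. Unset Strict Implicit. Unset Printing Implicit Defensive.
Import Order.TTheory GRing.Theory Num.Theory.

Definition idx (d : nat) := {ffun 'I_d -> 'I_4}.

Section Defs.
Variable R : realFieldType.
Local Open Scope ring_scope.

Definition M4 (d : nat) (a : idx d) : R :=
  if ((\sum_(i < d) (a i : nat)) %% 4 == 0)%N then 1 else 0.

Definition permute_coords d (s : 'S_d) (a : idx d) : idx d := [ffun i => a (s i)].
Definition permute_value d (i : 'I_d) (t : 'S_4) (a : idx d) : idx d :=
  [ffun j => if j == i then t (a j) else a j].

Inductive equivalent d (B : idx d -> R) : (idx d -> R) -> Prop :=
| equiv_refl C : (forall a, C a = B a) -> equivalent B C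
| equiv_coords C C' (s : 'S_d) :
    equivalent B C -> (forall a, C' a = C (permute_coords s a)) -> equivalent B C'
| equiv_value C C' (i : 'I_d) (t : 'S_4) :
    equivalent B C -> (forall a, C' a = C (permute_value i t a)) -> equivalent B C'.

Definition is_diagonal d (D : {set idx d}) : bool :=
  (#|D| == 4)%N &&
  [forall a in D, forall b in D, (a != b) ==> [forall i, a i != b i]].

Definition per d (A : idx d -> R) : R :=
  \sum_(D : {set idx d} | is_diagonal D) \prod_(a in D) A a.
End Defs.

(* p_1, p_2, p_3 and mu_1, mu_2, mu_3.  The parameter eps in {1,2,3} is
   encoded as e : 'I_3 with eps = e + 1. *)
Definition pmap (e : 'I_3) (x : 'I_4) : bool :=
  match val e, val x with
  | 0, _ => (2 <= x)%N
  | 1, _ => odd x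
  | _, _ => (x == 1 :> nat) || (x == 2 :> nat)
  end.

Definition mumap (e : 'I_3) (x : 'I_4) : bool :=
  match val e with
  | 0 => odd x
  | 1 => (2 <= x)%N
  | _ => odd x
  end.

Definition weight d (y : {ffun 'I_d -> bool}) : nat := \sum_(i < d) (y i : nat).

Definition pvec d (E : {ffun 'I_d -> 'I_3}) (a : idx d) : {ffun 'I_d -> bool} :=
  [ffun i => pmap (E i) (a i)].

(* Block permutation with parameters (E, lam, s).  lam is given as a total
   function on {0,1}^d; only its values on Q_s^d are ever used (the first
   condition forces pvec E a \in Q_s^d). *)
Definition block_perm (R : realFieldType) d (E : {ffun 'I_d -> 'I_3})
    (lam : {ffun 'I_d -> bool} -> bool) (s : bool) (a : idx d) : R :=
  if ((\big[addb/false]_(i < d) pmap (E i) ((a : idx d) i)) == s) &&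
     ((\big[addb/false]_(i < d) mumap (E i) (a i)) (+) lam (pvec E a) == false)
  then 1%R else 0%R.

Definition subcube d (E : {ffun 'I_d -> 'I_3}) (y : {ffun 'I_d -> bool}) : {set idx d} :=
  [set a : idx d | [forall i, pmap (E i) (a i) == y i]].

Definition filled d (s : bool) (y : {ffun 'I_d -> bool}) : bool :=
  odd (weight y) == s.

(* An empty tessellation forces E = E' and s' = ~~ s: otherwise a single coordinate value
   puts some index into a filled subcube of both B and B'.  The supports of B and B' are then
   the two halves of one set {a | xor_i mu_(E i) (a i) = c (p(a))}, with c equal to mu on the
   filled subcubes of B and to mu' on the others.  As x |-> (p_e x, mu_e x) is a bijection onto
   bool * bool, a diagonal in that set is given by four subcube labels y0, ~y0, y2, ~y2 and four
   mu-vectors which complete them coordinatewise to four distinct pairs and whose xor-sums are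
   the c-values of the labels.  Such vectors exist as soon as c y0 + c ~y0 + c y2 + c ~y2 = 0
   and y0, y2 agree in one coordinate and differ in another.  For the three pairs formed from
   0, e_0, e_1 (which agree off {0, 1}, hence d >= 3) the three such sums add up to 0, so one
   of them vanishes. *)

From HB Require Import structures.
From mathcomp Require Import all_boot all_order all_fingroup all_algebra.
Import Order.TTheory GRing.Theory Num.Theory.
Set Implicit Arguments. Unset Strict Implicit. Unset Printing Implicit Defensive.

Definition coord_of (e : 'I_3) (y m : bool) : 'I_4 :=
  inord (match val e with
         | 0 => 2 * y + m
         | 1 => 2 * m + y
         | _ => if y then 2 - m else 3 * m
         end).

Lemma pmap_coord_of e y m : pmap e (coord_of e y m) = y.
Proof. by case: e => [[|[|[|?]]] ?] //; case: y; case: m; rewrite /pmap /coord_of /= inordK. Qed.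

Lemma mumap_coord_of e y m : mumap e (coord_of e y m) = m.
Proof. by case: e => [[|[|[|?]]] ?] //; case: y; case: m; rewrite /mumap /coord_of /= inordK. Qed.

Lemma big_addb_const d (b : bool) : \big[addb/false]_(i < d) b = b && odd d.
Proof.
elim: d => [|d IH]; first by rewrite big_ord0 andbF.
by rewrite big_ord_recr /= IH; case: (b); case: (odd d).
Qed.

Lemma big_addb_delta d (j : 'I_d) (b : bool) : \big[addb/false]_(i < d) ((i == j) && b) = b.
Proof. by rewrite (bigD1 j) //= eqxx big1 ?addbF // => i /negbTE ->. Qed.

Lemma odd_weight d (y : {ffun 'I_d -> bool}) : odd (weight y) = \big[addb/false]_(i < d) y i.
Proof. by rewrite /weight; elim/big_rec2: _ => // i x b _ <-; rewrite oddD; case: (y i). Qed.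

Definition diagonal_fun d (F : 'I_4 -> idx d) : Prop :=
  forall k k' : 'I_4, k != k' -> forall i, F k i != F k' i.

Lemma diagonal_fun_inj d (F : 'I_4 -> idx d) : (0 < d)%N -> diagonal_fun F -> injective F.
Proof.
move=> d_gt0 diagF k k' eqF; apply/eqP; apply: contraT => neqk.
by have := diagF _ _ neqk (Ordinal d_gt0); rewrite eqF eqxx.
Qed.

Lemma is_diagonal_image d (F : 'I_4 -> idx d) :
  (0 < d)%N -> diagonal_fun F -> is_diagonal [set F k | k : 'I_4].
Proof.
move=> d_gt0 diagF; rewrite /is_diagonal card_imset ?card_ord //=; last first.
  exact: diagonal_fun_inj.
apply/forall_inP => _ /imsetP[k _ ->]; apply/forall_inP => _ /imsetP[k' _ ->].
by apply/implyP => neqF; apply/forallP; apply: diagF; apply: contraNneq neqF => ->.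
Qed.

Lemma per_gt0 (R : realFieldType) d (A : idx d -> R) (F : 'I_4 -> idx d) :
  (0 < d)%N -> diagonal_fun F -> (forall a, 0 <= A a)%R -> (forall k, 0 < A (F k))%R ->
  (0 < per A)%R.
Proof.
move=> d_gt0 diagF A_ge0 AF_gt0.
rewrite /per (bigD1 [set F k | k : 'I_4]) ?is_diagonal_image //=.
apply: ltr_pwDl.
  by apply: prodr_gt0 => _ /imsetP[k _ ->].
by apply: sumr_ge0 => D _; apply: prodr_ge0.
Qed.

Section Solutions.
Variables (d : nat) (E : {ffun 'I_d -> 'I_3}).

Definition p_parity (a : idx d) : bool := \big[addb/false]_(i < d) pmap (E i) (a i).
Definition mu_parity (a : idx d) : bool := \big[addb/false]_(i < d) mumap (E i) (a i).

Lemma odd_weight_pvec a : odd (weight (pvec E a)) = p_parity a.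
Proof. by rewrite odd_weight; apply: eq_bigr => i _; rewrite ffunE. Qed.

Definition index_of (y m : {ffun 'I_d -> bool}) : idx d :=
  [ffun i => coord_of (E i) (y i) (m i)].

Lemma pvec_index_of y m : pvec E (index_of y m) = y.
Proof. by apply/ffunP => i; rewrite !ffunE pmap_coord_of. Qed.

Lemma mu_parity_index_of y m : mu_parity (index_of y m) = \big[addb/false]_(i < d) m i.
Proof. by apply: eq_bigr => i _; rewrite ffunE mumap_coord_of. Qed.

Lemma index_of_diagonal (Y M : 'I_4 -> {ffun 'I_d -> bool}) :
  (forall i, injective (fun k => (Y k i, M k i))) ->
  diagonal_fun (fun k => index_of (Y k) (M k)).
Proof.
move=> injYM k k' neqk i; rewrite !ffunE; apply: contra neqk => /eqP eq_coord.
apply/eqP/(injYM i); congr (_, _).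
- by rewrite -(pmap_coord_of (E i) (Y k i) (M k i)) eq_coord pmap_coord_of.
- by rewrite -(mumap_coord_of (E i) (Y k i) (M k i)) eq_coord mumap_coord_of.
Qed.

Definition negv (y : {ffun 'I_d -> bool}) : {ffun 'I_d -> bool} := [ffun i => ~~ y i].

Definition cross (S : pred 'I_d) (a b : {ffun 'I_d -> bool}) : {ffun 'I_d -> bool} :=
  [ffun i => if S i then ~~ a i else ~~ b i].

Lemma big_addb_cross S a b :
  \big[addb/false]_(i < d) cross S a b i
  = odd d (+) \big[addb/false]_(i < d) (if S i then a i else b i).
Proof.
rewrite -[odd d]andTb -big_addb_const -big_split /=.
by apply: eq_bigr => i _; rewrite ffunE; case: (S i).
Qed.

Definition quadruple T (x0 x1 x2 x3 : T) (k : 'I_4) : T :=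
  match val k with 0 => x0 | 1 => x1 | 2 => x2 | _ => x3 end.

Lemma quadruple_cross_injective (y0 y2 a b : {ffun 'I_d -> bool}) i :
  let S : pred 'I_d := fun t => y0 t == y2 t in
  injective (fun k => (quadruple y0 (negv y0) y2 (negv y2) k i,
                       quadruple a b (cross S a b) (cross S b a) k i)).
Proof.
move=> S k k' eq_pairs; apply: val_inj; move: eq_pairs.
case: k => [[|[|[|[|?]]]] ?] //; case: k' => [[|[|[|[|?]]]] ?] //=; rewrite !ffunE /S /=;
by case: (y0 i); case: (y2 i); case: (a i); case: (b i).
Qed.

Lemma exists_diagonal_of_pair (c : {ffun 'I_d -> bool} -> bool)
    (y0 y2 : {ffun 'I_d -> bool}) (j l : 'I_d) :
  y0 j = y2 j -> y0 l != y2 l -> c y0 (+) c (negv y0) (+) c y2 (+) c (negv y2) = false ->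
  exists F : 'I_4 -> idx d, diagonal_fun F /\ forall k, mu_parity (F k) = c (pvec E (F k)).
Proof.
move=> y0y2j y0y2l c_bal.
pose S : pred 'I_d := fun t => y0 t == y2 t.
have Sj : S j by rewrite /S y0y2j.
have Sl : S l = false by apply/negbTE.
have neq_jl : j != l by apply: contraNneq y0y2l => <-; rewrite y0y2j.
pose beta := c (negv y2) (+) odd d.
pose gamma := c y2 (+) c y0 (+) odd d.
pose a : {ffun 'I_d -> bool} := [ffun i => (i == j) && c y0].
pose b : {ffun 'I_d -> bool} := [ffun i => ((i == j) && beta) (+) ((i == l) && gamma)].
have ab_on_S i : (if S i then a i else b i) = ((i == j) && c y0) (+) ((i == l) && gamma).
  rewrite !ffunE; have [->|neq_ij] := eqVneq i j; first by rewrite Sj (negbTE neq_jl) addbF.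
  by have [->|_] := eqVneq i l; rewrite ?Sl //; case: (S i).
have ba_on_S i : (if S i then b i else a i) = (i == j) && beta.
  rewrite !ffunE; have [->|neq_ij] := eqVneq i j; first by rewrite Sj (negbTE neq_jl) addbF.
  by have [->|_] := eqVneq i l; rewrite ?Sl //; case: (S i).
(* The xor-sums of a, b, cross S a b and cross S b a are c y0, beta (+) gamma,
   odd d (+) c y0 (+) gamma and odd d (+) beta; c_bal makes the second one c (negv y0). *)
pose Y := quadruple y0 (negv y0) y2 (negv y2).
pose M := quadruple a b (cross S a b) (cross S b a).
exists (fun k => index_of (Y k) (M k)); split.
  by apply: index_of_diagonal => i; apply: quadruple_cross_injective.
move=> k; rewrite pvec_index_of mu_parity_index_of.
case: k => [[|[|[|[|?]]]] ?] //=; rewrite /Y /M /quadruple /=.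
- by under eq_bigr do rewrite ffunE; rewrite big_addb_delta.
- under eq_bigr do rewrite ffunE; rewrite big_split !big_addb_delta /=.
  by move: c_bal; rewrite /beta /gamma; case: (c y0); case: (c (negv y0)); case: (c y2);
     case: (c (negv y2)); case: (odd d).
- rewrite big_addb_cross; under eq_bigr do rewrite ab_on_S.
  rewrite big_split !big_addb_delta /=.
  by rewrite /gamma; case: (c y0); case: (c y2); case: (odd d).
- rewrite big_addb_cross; under eq_bigr do rewrite ba_on_S.
  by rewrite big_addb_delta /beta; case: (c (negv y2)); case: (odd d).
Qed.

End Solutions.

Lemma exists_diagonal_solutions d (E : {ffun 'I_d -> 'I_3}) (c : {ffun 'I_d -> bool} -> bool) :
  (2 < d)%N ->
  exists F : 'I_4 -> idx d, diagonal_fun F /\ forall k, mu_parity E (F k) = c (pvec E (F k)).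
Proof.
move=> d_gt2; pose i0 : 'I_d := Ordinal (ltnW (ltnW d_gt2)).
pose i1 : 'I_d := Ordinal (ltnW d_gt2); pose i2 : 'I_d := Ordinal d_gt2.
pose u : {ffun 'I_d -> bool} := [ffun => false].
pose w : {ffun 'I_d -> bool} := [ffun i => i == i0].
pose w' : {ffun 'I_d -> bool} := [ffun i => i == i1].
pose unbalanced y y' := c y (+) c (negv y) (+) c y' (+) c (negv y').
(* Every c-value occurs in two of the three sums, so they xor to false. *)
have : [|| ~~ unbalanced u w, ~~ unbalanced u w' | ~~ unbalanced w w'].
  rewrite /unbalanced; move: (c u) (c (negv u)) (c w) (c (negv w)) (c w') (c (negv w')).
  by do 6![case].
case/or3P => /negbTE balanced.
- by apply: (exists_diagonal_of_pair E (j := i1) (l := i0) _ _ balanced); rewrite !ffunE.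
- by apply: (exists_diagonal_of_pair E (j := i0) (l := i1) _ _ balanced); rewrite !ffunE.
- by apply: (exists_diagonal_of_pair E (j := i2) (l := i0) _ _ balanced); rewrite !ffunE.
Qed.

Lemma mem_subcube_pvec d (E : {ffun 'I_d -> 'I_3}) a : a \in subcube E (pvec E a).
Proof. by rewrite inE; apply/forallP => i; rewrite ffunE. Qed.

Lemma filled_pvec d (E : {ffun 'I_d -> 'I_3}) s a : filled s (pvec E a) = (p_parity E a == s).
Proof. by rewrite /filled odd_weight_pvec. Qed.

Lemma exists_coord_with_pmaps e e' y y' :
  (e != e') || (y == y') -> exists x, pmap e x = y /\ pmap e' x = y'.
Proof.
case: e => [[|[|[|?]]] ?] //; case: e' => [[|[|[|?]]] ?] //; case: y; case: y' => // _;
first [ by exists (inord 0); rewrite /pmap /= inordK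
      | by exists (inord 1); rewrite /pmap /= inordK
      | by exists (inord 2); rewrite /pmap /= inordK
      | by exists (inord 3); rewrite /pmap /= inordK ].
Qed.

Definition index_at d (i : 'I_d) (x : 'I_4) : idx d := [ffun k => if k == i then x else ord0].

Lemma p_parity_index_at d (E : {ffun 'I_d -> 'I_3}) i x : p_parity E (index_at i x) = pmap (E i) x.
Proof.
rewrite /p_parity (bigD1 i) //= ffunE eqxx big1 ?addbF // => k /negbTE neq_ki.
by rewrite ffunE neq_ki; case: (E k) => [[|[|[|?]]] ?].
Qed.

Section EmptyTessellation.
Variables (d : nat) (E E' : {ffun 'I_d -> 'I_3}) (s s' : bool).
Hypothesis htess : forall y y' : {ffun 'I_d -> bool},
  filled s y -> filled s' y' -> subcube E y :&: subcube E' y' = set0.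

Lemma no_index_filled_in_both a : p_parity E a = s -> p_parity E' a = s' -> False.
Proof.
move=> pE pE'; have := @htess (pvec E a) (pvec E' a).
rewrite !filled_pvec pE pE' !eqxx => /(_ isT isT) /setP /(_ a).
by rewrite inE !mem_subcube_pvec inE.
Qed.

Lemma empty_tessellation_same_eps : E' = E.
Proof.
apply/ffunP => i; apply/eqP; apply: contraT => neqE.
have /exists_coord_with_pmaps[x [pE pE']] : (E i != E' i) || (s == s') by rewrite eq_sym neqE.
by case: (@no_index_filled_in_both (index_at i x)); rewrite p_parity_index_at.
Qed.

Lemma empty_tessellation_opposite_parity : (0 < d)%N -> s' = ~~ s.
Proof.
move=> d_gt0; pose i : 'I_d := Ordinal d_gt0.
have [eq_s|] := boolP (s == s'); last by case: s s' => [] [].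
have /exists_coord_with_pmaps[x [pE pE']] : (E i != E i) || (s == s') by rewrite eq_s orbT.
case: (@no_index_filled_in_both (index_at i x)); rewrite p_parity_index_at //.
by rewrite empty_tessellation_same_eps.
Qed.
End EmptyTessellation.

Local Open Scope ring_scope.

Lemma block_perm_ge0 (R : realFieldType) d (E : {ffun 'I_d -> 'I_3}) lam s a :
  0 <= block_perm R E lam s a.
Proof. by rewrite /block_perm; case: ifP. Qed.

Lemma block_perm_eq1 (R : realFieldType) d (E : {ffun 'I_d -> 'I_3}) lam s a :
  p_parity E a = s -> mu_parity E a = lam (pvec E a) -> block_perm R E lam s a = 1.
Proof.
by move=> pE muE; rewrite /block_perm -/(p_parity E a) -/(mu_parity E a) pE muE addbb !eqxx.
Qed.

Lemma convex_comb_gt0 (R : realFieldType) (lam x y : R) :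
  0 < lam -> lam < 1 -> 0 <= x -> 0 <= y -> x = 1 \/ y = 1 -> 0 < lam * x + (1 - lam) * y.
Proof.
move=> lam_gt0 lam_lt1 x_ge0 y_ge0; have lam'_gt0 : 0 < 1 - lam by rewrite subr_gt0.
case=> ->; rewrite mulr1.
- by rewrite ltr_wpDr // mulr_ge0 // ltW.
- by rewrite ltr_wpDl // mulr_ge0 // ltW.
Qed.

Unset Implicit Arguments.

Theorem mainTheorem12 (R : realFieldType) (d : nat) (hd : (3 <= d)%N)
    (B B' : idx d -> R) (lam : R) (hlam0 : 0 < lam) (hlam1 : lam < 1)
    (hB : equivalent (@M4 R d) B) (hB' : equivalent (@M4 R d) B')
    (E E' : {ffun 'I_d -> 'I_3})
    (mu mu' : {ffun 'I_d -> bool} -> bool) (s s' : bool)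
    (hBp : forall a, B a = block_perm R E mu s a)
    (hBp' : forall a, B' a = block_perm R E' mu' s' a)
    (htess : forall y y' : {ffun 'I_d -> bool},
        filled s y -> filled s' y' -> subcube E y :&: subcube E' y' = set0) :
  0 < per (fun a => lam * B a + (1 - lam) * B' a).
Proof.
have d_gt0 : (0 < d)%N by apply: leq_trans hd.
have E'E := empty_tessellation_same_eps htess.
have s'E := empty_tessellation_opposite_parity htess d_gt0.
subst E' s'; clear htess.
pose c y := if filled s y then mu y else mu' y.
have [F [diagF solF]] := exists_diagonal_solutions E c hd.
apply: (per_gt0 d_gt0 diagF) => [a|k].
  by rewrite hBp hBp' addr_ge0 // mulr_ge0 ?block_perm_ge0 ?subr_ge0 ?ltW.
apply: convex_comb_gt0; rewrite ?hBp ?hBp' ?block_perm_ge0 //.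
move: (solF k); rewrite /c filled_pvec; case: eqP => [p_s|/eqP p_ns] mu_F.
- by left; apply: block_perm_eq1.
- by right; apply: block_perm_eq1 => //; move: p_ns; case: (p_parity _ _); case: (s).
Qed.
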